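(* Assume the standing assumptions (A1) and (A2) below. Let $x^+\in D\cap\ell^1_{\overline{r}}$ and $t\in(0,1)$, and for each $\alpha>0$ let $x_\alpha\in\operatorname{argmin}_{x\in D}\left[\frac12\|F(x^+)-F(x)\|_{\mathbb{Y}}^2+\alpha\|x\|_{\overline{r},1}\right]$. The following are equivalent: (i) $x^+\in k_t$; (ii) there is $C_2>0$ with $\|x^+-x_\alpha\|_{\overline{r},1}\le C_2\alpha^{1-t}$ for all $\alpha>0$; (iii) there is $C_3>0$ with $\|F(x^+)-F(x_\alpha)\|_{\mathbb{Y}}\le C_3\alpha^{\frac{2-t}{2}}$ for all $\alpha>0$. More precisely, there is a constant $c>0$ depending only on $L$ and $t$ such that one can choose $C_2=c\|x^+\|_{k_t}^t$ in (ii), $C_3=\sqrt{2C_2}$ in (iii), and (iii) implies $\|x^+\|_{k_t}\le cC_3^{2/t}$.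
   Context: $\Lambda$ is a countable index set. For a sequence $\omega$ of positive reals and $p\in(0,\infty)$, $\|x\|_{\omega,p}=\left(\sum_{j\in\Lambda}\omega_j^p|x_j|^p\right)^{1/p}$ (possibly $+\infty$) and $\ell^p_\omega=\{x\in\mathbb{R}^\Lambda:\|x\|_{\omega,p}<\infty\}$. For $t\in(0,2)$, $k_t=\{x:\|x\|_{k_t}<\infty\}$ with $\|x\|_{k_t}=\sup_{\alpha>0}\alpha\left(\sum_{j}\overline{a}_j^{-2}\overline{r}_j^2\mathbf{1}_{\{\overline{a}_j^{-2}\overline{r}_j\alpha<|x_j|\}}\right)^{1/t}$. (A1): $\overline{a},\overline{r}$ are sequences of positive reals indexed by $\Lambda$ such that for every $\varepsilon>0$ all but finitely many $j$ satisfy $\overline{a}_j\overline{r}_j^{-1}\le\varepsilon$; $\mathbb{Y}$ is a Banach space; $D\subseteq\ell^2_{\overline{a}}$ is closed with $D\cap\ell^1_{\overline{r}}\ne\emptyset$; $F:D\to\mathbb{Y}$ and there is $L>0$ with $L^{-1}\|x^{(1)}-x^{(2)}\|_{\overline{a},2}\le\|F(x^{(1)})-F(x^{(2)})\|_{\mathbb{Y}}\le L\|x^{(1)}-x^{(2)}\|_{\overline{a},2}$ for all $x^{(1)},x^{(2)}\in D$. (A2): if $x\in D$ and $z\in\ell^2_{\overline{a}}$ with $|z_j|\le|x_j|$ for all $j$, then $z\in D$. *)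

From HB Require Import structures.
From mathcomp Require Import all_boot all_order all_algebra.
From mathcomp Require Import all_classical all_reals all_analysis.
Set Implicit Arguments. Unset Strict Implicit. Unset Printing Implicit Defensive.
Import Order.TTheory GRing.Theory Num.Theory.
Import numFieldNormedType.Exports.
Local Open Scope classical_set_scope.
Local Open Scope ring_scope.

Section Defs.
Context {R : realType} {Lam : countType}.

Definition wnorm (w : Lam -> R) (p : R) (x : Lam -> R) : \bar R :=
  poweR (\esum_(j in [set: Lam]) ((w j * `|x j|) `^ p)%:E) p^-1.

Definition in_lp (w : Lam -> R) (p : R) (x : Lam -> R) : Prop :=
  (wnorm w p x < +oo)%E.

Definition kt_sum (a r : Lam -> R) (x : Lam -> R) (alpha : R) : \bar R :=
  \esum_(j in [set j | (a j)^-2 * r j * alpha < `|x j|])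
     ((a j)^-2 * (r j) ^+ 2)%:E.

Definition kt_norm (a r : Lam -> R) (t : R) (x : Lam -> R) : \bar R :=
  ereal_sup [set (alpha%:E * poweR (kt_sum a r x alpha) t^-1)%E
            | alpha in [set alpha : R | 0 < alpha]].

Definition in_kt (a r : Lam -> R) (t : R) (x : Lam -> R) : Prop :=
  (kt_norm a r t x < +oo)%E.

Definition closed_l2 (a : Lam -> R) (D : set (Lam -> R)) : Prop :=
  forall (u : nat -> Lam -> R) (x : Lam -> R),
    (forall n, D (u n)) -> in_lp a 2 x ->
    (wnorm a 2 (u n \- x)%R @[n --> \oo] --> 0%E) -> D x.

Definition A1 {Y : completeNormedModType R} (a r : Lam -> R)
  (D : set (Lam -> R)) (F : (Lam -> R) -> Y) (L : R) : Prop :=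
  [/\ (forall j, 0 < a j) /\ (forall j, 0 < r j),
      (forall eps : R, 0 < eps -> finite_set [set j | ~ (a j / r j <= eps)]),
      (D `<=` in_lp a 2) /\ closed_l2 a D /\ (D `&` in_lp r 1 !=set0),
      0 < L &
      (forall x1 x2, D x1 -> D x2 ->
         ((L^-1)%:E * wnorm a 2 (x1 \- x2)%R <= (`|F x1 - F x2|)%:E)%E /\
         ((`|F x1 - F x2|)%:E <= L%:E * wnorm a 2 (x1 \- x2)%R)%E)].

Definition A2 (a : Lam -> R) (D : set (Lam -> R)) : Prop :=
  forall x z, D x -> in_lp a 2 z -> (forall j, `|z j| <= `|x j|) -> D z.

Definition tikh {Y : completeNormedModType R} (r : Lam -> R)
  (F : (Lam -> R) -> Y) (xp : Lam -> R) (alpha : R) (x : Lam -> R) : \bar R :=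
  ((2^-1 * `|F xp - F x| ^+ 2)%:E + alpha%:E * wnorm r 1 x)%E.

Definition is_argmin {Y : completeNormedModType R} (r : Lam -> R)
  (D : set (Lam -> R)) (F : (Lam -> R) -> Y) (xp : Lam -> R) (alpha : R)
  (x : Lam -> R) : Prop :=
  D x /\ forall z, D z -> (tikh r F xp alpha x <= tikh r F xp alpha z)%E.

End Defs.

(* Write th_j = a_j^-2 r_j and w_j = a_j^-2 r_j^2.  The k_t quasi-norm is exactly
   what bounds the total weight w_j of the coordinates with th_j * alpha < |x_j|
   by (||x||_{k_t} / alpha)^t, for every alpha > 0.
   (i) => (ii): comparing the Tikhonov functional at x_alpha and at x+ bounds
   ||x+ - x_alpha||_{r,1} by sums over the coordinates where |x+_j| > th_j alpha,
   handled by AM-GM against the residual through the lower Lipschitz bound, and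
   over the remaining ones, handled by a dyadic decomposition of the thresholds
   th_j alpha 2^-k, which produces a geometric series since t < 1.
   (ii) => (iii) is minimality of x_alpha against x+.
   (iii) => (i): on a coordinate with |x+_j| > th_j alpha, either x_alpha lost
   half of x+_j, which the lower Lipschitz bound charges to the residual, or
   x_alpha can be shrunk there by a multiple of th_j alpha without leaving D (A2);
   minimality against the shrunk point and the upper Lipschitz bound then control
   alpha^2 sum w_j by the squared residual as well. *)

From HB Require Import structures.
From mathcomp Require Import all_boot all_order all_algebra.
From mathcomp Require Import all_classical all_reals all_analysis.
From mathcomp Require Import finmap.
From mathcomp Require Import ring lra.
Import Order.TTheory GRing.Theory Num.Theory.
Import numFieldNormedType.Exports.
Local Open Scope classical_set_scope.
Local Open Scope ring_scope.

Section esum_finite_sums.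
Context {R : realType} {T : choiceType}.
Implicit Types (S : set T) (f : T -> R) (s : seq T).

Lemma esum_le_sums S f (B : R) :
  (forall s, uniq s -> (forall j, j \in s -> S j) -> \sum_(j <- s) f j <= B) ->
  (\esum_(j in S) (f j)%:E <= B%:E)%E.
Proof.
move=> sumB; apply: ge_ereal_sup => _ [X [finX XS] <-].
rewrite fsbig_finite// sumEFin lee_fin; apply: sumB; first exact: fset_uniq.
by move=> j; rewrite in_fset_set// => /set_mem /XS.
Qed.

Lemma sum_le_esum S f s : uniq s -> (forall j, j \in s -> S j) ->
  ((\sum_(j <- s) f j)%:E <= \esum_(j in S) (f j)%:E)%E.
Proof.
move=> us sS; apply: esum_ge; exists [set` s].
  by split; [exact: finite_seq | move=> j /= /sS].
by rewrite -fsbig_seq// sumEFin.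
Qed.

Lemma esum_finite_support f s : uniq s -> (forall j, 0 <= f j) ->
  (forall j, j \notin s -> f j = 0) ->
  \esum_(j in [set: T]) (f j)%:E = (\sum_(j <- s) f j)%:E.
Proof.
move=> us f0 fs.
transitivity (\esum_(j in [set: T]) (if j \in [set` s] then (f j)%:E else 0%E)).
  apply: eq_esum => j _; case: ifPn => // /negP js.
  by rewrite fs//; apply/negP => sj; apply: js; rewrite mem_setE.
rewrite -esum_mkcond esum_fset ?finite_seq// => [|j _]; last by rewrite lee_fin.
by rewrite -fsbig_seq// sumEFin.
Qed.

End esum_finite_sums.

Lemma poweR_half_le {R : realType} (Q : \bar R) (b : R) : (0 <= Q)%E -> 0 <= b ->
  (poweR Q 2^-1 <= b%:E)%E = (Q <= (b ^+ 2)%:E)%E.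
Proof.
case: Q => [q| |] //= q0 b0; last by rewrite invr_eq0 pnatr_eq0 /= !leye_eq.
rewrite !lee_fin in q0 *; rewrite powR12_sqrt//.
by rewrite -ler_sqr ?nnegrE ?sqrtr_ge0// sqr_sqrtr.
Qed.

Section weighted_norms.
Context {R : realType} {Lam : countType}.
Implicit Types (w x y z : Lam -> R) (p : R).

Lemma wnorm_ge0 w p x : (0 <= wnorm w p x)%E.
Proof. exact: poweR_ge0. Qed.

Lemma in_lp_fin {w p x} : in_lp w p x -> exists2 n, 0 <= n & wnorm w p x = n%:E.
Proof.
rewrite /in_lp; have := wnorm_ge0 w p x.
by case: (wnorm w p x) => [n| |] //= n0 _; exists n.
Qed.

Lemma wnorm1E w x : (forall j, 0 <= w j) ->
  wnorm w 1 x = \esum_(j in [set: Lam]) (w j * `|x j|)%:E.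
Proof.
move=> w0; rewrite /wnorm invr1 poweRe1; last first.
  by apply: esum_ge0 => j _; rewrite lee_fin powR_ge0.
by apply: eq_esum => j _; rewrite powRr1 // mulr_ge0.
Qed.

Lemma wnorm2E w x : (forall j, 0 <= w j) ->
  wnorm w 2 x = poweR (\esum_(j in [set: Lam]) ((w j * `|x j|) ^+ 2)%:E) 2^-1.
Proof.
move=> w0; rewrite /wnorm; congr poweR; apply: eq_esum => j _.
by rewrite powR_mulrn // mulr_ge0.
Qed.

Lemma wnorm2_le w x (b : R) : (forall j, 0 <= w j) -> 0 <= b ->
  (wnorm w 2 x <= b%:E)%E =
  (\esum_(j in [set: Lam]) ((w j * `|x j|) ^+ 2)%:E <= (b ^+ 2)%:E)%E.
Proof.
move=> w0 b0; rewrite wnorm2E// poweR_half_le//.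
by apply: esum_ge0 => j _; rewrite lee_fin sqr_ge0.
Qed.

Lemma sum_sq_le_wnorm2 w x (b : R) (s : seq Lam) (P : pred Lam) :
  (forall j, 0 <= w j) -> 0 <= b -> uniq s -> (wnorm w 2 x <= b%:E)%E ->
  \sum_(j <- s | P j) (w j * `|x j|) ^+ 2 <= b ^+ 2.
Proof.
move=> w0 b0 us; rewrite wnorm2_le// => xb.
apply: le_trans (_ : \sum_(j <- s) (w j * `|x j|) ^+ 2 <= _).
  by rewrite [leRHS](bigID P) /= lerDl sumr_ge0// => j _; rewrite sqr_ge0.
by rewrite -lee_fin (le_trans _ xb)// sum_le_esum.
Qed.

Lemma wnorm_le_abs w p y z : (forall j, 0 <= w j) -> 0 <= p ->
  (forall j, `|z j| <= `|y j|) -> (wnorm w p z <= wnorm w p y)%E.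
Proof.
move=> w0 p0 zy; apply: gt0_ler_poweR; first by rewrite invr_ge0.
- by rewrite in_itv /= leey andbT esum_ge0// => j _; rewrite lee_fin powR_ge0.
- by rewrite in_itv /= leey andbT esum_ge0// => j _; rewrite lee_fin powR_ge0.
apply: le_esum => j _; rewrite lee_fin ge0_ler_powR// ?nnegrE ?mulr_ge0//.
exact: ler_wpM2l.
Qed.

Lemma in_lp_le_abs {w p y z} : (forall j, 0 <= w j) -> 0 <= p ->
  (forall j, `|z j| <= `|y j|) -> in_lp w p y -> in_lp w p z.
Proof. by move=> w0 p0 zy; apply: le_lt_trans; exact: wnorm_le_abs. Qed.

Lemma wnorm1_le_add_sub w x y : (forall j, 0 <= w j) ->
  (wnorm w 1 y <= wnorm w 1 x + wnorm w 1 (y \- x)%R)%E.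
Proof.
move=> w0; have wx0 z j : (0 <= (w j * `|z j|)%:E)%E by rewrite lee_fin mulr_ge0.
rewrite !wnorm1E // -esumD => [|j _|j _] //.
apply: le_esum => j _; rewrite -EFinD lee_fin /= -mulrDr ler_wpM2l //.
by have := ler_normD (x j) (y j - x j); rewrite addrC subrK.
Qed.

Lemma wnorm1_add_sub_le w x y (P : pred Lam) : (forall j, 0 <= w j) ->
  (wnorm w 1 y + wnorm w 1 (y \- x)%R <= wnorm w 1 x +
   \esum_(j in [set: Lam])
     (2 * (if P j then w j * `|y j - x j| else w j * `|y j|))%:E)%E.
Proof.
move=> w0; have wx0 z j : (0 <= (w j * `|z j|)%:E)%E by rewrite lee_fin mulr_ge0.
rewrite !wnorm1E // -!esumD => [|j _|j _|j _|j _] //; last first.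
  by rewrite lee_fin; case: ifP => _; rewrite !mulr_ge0.
apply: le_esum => j _; rewrite -EFinD lee_fin /=.
have := ler_normD (x j) (y j - x j); rewrite [x j + _]addrC subrK.
have := ler_normB (y j) (x j); have := w0 j.
by case: ifP => _; nra.
Qed.

End weighted_norms.

Section powR_facts.
Context {R : realType}.
Implicit Types x y t : R.

Lemma powR_exprn x t n : 0 <= x -> (x ^+ n) `^ t = (x `^ t) ^+ n.
Proof.
move=> x0; elim: n => [|n IH]; first by rewrite !expr0 powR1.
by rewrite !exprS powRM ?exprn_ge0 // IH.
Qed.

Lemma powRV x t : 0 < x -> (x^-1) `^ t = (x `^ t)^-1.
Proof. by move=> x0; rewrite -powR_inv1 ?ltW // -powRrM mulN1r powRN. Qed.

Lemma mul_powR_div x y t : 0 <= x -> 0 < y ->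
  y * (x / y) `^ t = x `^ t * y `^ (1 - t).
Proof.
move=> x0 y0; rewrite powRM //; last by rewrite invr_ge0 ltW.
rewrite powRV // powRB; last by rewrite (gt_eqF y0) implybT.
rewrite powRr1 ?ltW //.
have : 0 < y `^ t by rewrite powR_gt0.
by move=> ?; field; rewrite gt_eqF.
Qed.

Lemma powR2_lt2 t : t < 1 -> 2 `^ t < 2 :> R.
Proof.
move=> t1; rewrite /powR pnatr_eq0 /= -[ltRHS]lnK ?posrE //.
by rewrite ltr_expR gtr_pMl ?ln_gt0 ?ltr1n.
Qed.

Lemma powR_half_sqr x p : 0 <= x ->
  (x `^ (p / 2)) ^+ 2 = x `^ p.
Proof.
by move=> x0; rewrite -powR_mulrn ?powR_ge0 // -powRrM mulfVK ?pnatr_eq0.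
Qed.

Lemma powR_addn x p n : 0 < x ->
  x `^ (n%:R + p) = x ^+ n * x `^ p.
Proof.
move=> x0; rewrite powRD; last by rewrite (gt_eqF x0) implybT.
by rewrite powR_mulrn // ltW.
Qed.

End powR_facts.

Lemma weighted_amgm {R : realFieldType} (a r c l : R) : 0 < a -> 0 < l ->
  r * c <= l / 2 * (a^-2 * r ^+ 2) + (2 * l)^-1 * (a * c) ^+ 2.
Proof.
move=> a0 l0; rewrite -subr_ge0.
have -> : l / 2 * (a^-2 * r ^+ 2) + (2 * l)^-1 * (a * c) ^+ 2 - r * c =
    (2 * l)^-1 * (l * r / a - a * c) ^+ 2 by field; rewrite !gt_eqF.
by rewrite mulr_ge0 ?sqr_ge0 // invr_ge0 mulr_ge0 // ltW.
Qed.

Lemma quadratic_gain_le {R : realFieldType} (e L sg y : R) :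
  0 <= e -> 0 <= L -> 0 < sg -> sg * L ^+ 2 <= 1 -> 0 <= y ->
  sg * y ^+ 2 <= e * L * sg * y + L ^+ 2 * sg ^+ 2 * y ^+ 2 / 2 ->
  y <= 2 * e * L.
Proof.
move=> e0 L0 sg0 sgL y0 gain.
have sgLy : L ^+ 2 * sg ^+ 2 * y ^+ 2 <= sg * y ^+ 2.
  have -> : L ^+ 2 * sg ^+ 2 * y ^+ 2 = sg * L ^+ 2 * (sg * y ^+ 2) by ring.
  by rewrite ler_piMl // mulr_ge0 ?sqr_ge0 // ltW.
have yy : y * (y - 2 * e * L) <= 0 by rewrite -(ler_pM2l sg0) mulr0; lra.
rewrite leNgt; apply/negP => lt_y; move: yy; rewrite leNgt mulr_gt0 ?subr_gt0 //.
by rewrite (le_lt_trans _ lt_y) // !mulr_ge0.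
Qed.

Lemma dyadic_layer_le {R : realType} (g u : R) N : 0 <= g -> u <= g ->
  g * (2^-1) ^+ N < u ->
  u <= \sum_(k < N) (if g * (2^-1) ^+ k.+1 < u then g * (2^-1) ^+ k else 0).
Proof.
move=> g0 ug; elim: N => [|N IH]; first by rewrite expr0 mulr1 ltNge ug.
move=> gNu; rewrite big_ord_recr /=.
have [gu|ug'] := ltP (g * (2^-1) ^+ N) u; last first.
  by rewrite gNu ler_wpDl // sumr_ge0 // => k _; case: ifP; rewrite ?mulr_ge0.
rewrite (le_trans (IH gu)) // lerDl; case: ifP => // _.
by rewrite mulr_ge0 // exprn_ge0.
Qed.

Section kt_norm.
Context {R : realType} {Lam : countType}.
Variables (a r x : Lam -> R) (t : R).
Hypothesis t_gt0 : 0 < t.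

Local Notation wt j := ((a j)^-2 * r j ^+ 2).
Local Notation th j := ((a j)^-2 * r j).

Lemma kt_weight_ge0 j : 0 <= wt j.
Proof. by rewrite mulr_ge0 // ?invr_ge0 sqr_ge0. Qed.

Lemma kt_sum_ge0 b : (0 <= kt_sum a r x b)%E.
Proof. by apply: esum_ge0 => j _; rewrite lee_fin kt_weight_ge0. Qed.

Lemma kt_norm_ge0 : (0 <= kt_norm a r t x)%E.
Proof.
apply: le_trans (_ : (1%:E * poweR (kt_sum a r x 1) t^-1 <= _)%E).
  by rewrite mul1e poweR_ge0.
by apply: ereal_sup_ubound; exists 1 => //; exact: ltr01.
Qed.

Lemma kt_norm_sum_le (K b : R) (s : seq Lam) : 0 < b ->
  (kt_norm a r t x <= K%:E)%E -> uniq s ->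
  (forall j, j \in s -> th j * b < `|x j|) ->
  \sum_(j <- s) wt j <= (K / b) `^ t.
Proof.
move=> b0 xK us sb; set S := \sum_(j <- s) _.
have S0 : 0 <= S by apply: sumr_ge0 => j _; exact: kt_weight_ge0.
have Ssum : (S%:E <= kt_sum a r x b)%E by apply: sum_le_esum => // j /sb.
have sumK : (b%:E * poweR (kt_sum a r x b) t^-1 <= K%:E)%E.
  by apply: le_trans xK; apply: ereal_sup_ubound; exists b.
have SK : b * S `^ t^-1 <= K.
  rewrite -lee_fin EFinM -poweR_EFin; apply: le_trans sumK.
  apply: lee_wpmul2l; first by rewrite lee_fin ltW.
  apply: gt0_ler_poweR => //; first by rewrite invr_ge0 ltW.
    by rewrite in_itv /= lee_fin S0 leey.
  by rewrite in_itv /= kt_sum_ge0 leey.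
have SKb : S `^ t^-1 <= K / b by rewrite ler_pdivlMr // mulrC.
have -> : S = (S `^ t^-1) `^ t by rewrite -powRrM mulVf ?gt_eqF // powRr1.
have Kb0 : 0 <= K / b := le_trans (powR_ge0 _ _) SKb.
by apply: ge0_ler_powR; rewrite ?nnegrE ?powR_ge0 // ltW.
Qed.

Lemma kt_norm_le_of_sums (C : R) : 0 <= C ->
  (forall b, 0 < b -> forall s, uniq s ->
     (forall j, j \in s -> th j * b < `|x j|) ->
     \sum_(j <- s) wt j <= C * b `^ (- t)) ->
  (kt_norm a r t x <= (C `^ t^-1)%:E)%E.
Proof.
move=> C0 sumsC; apply: ge_ereal_sup => _ [b /= b0 <-].
have sumC : (kt_sum a r x b <= (C * b `^ (- t))%:E)%E.
  by apply: esum_le_sums => s us sb; apply: sumsC => // j /sb.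
have powC : (poweR (kt_sum a r x b) t^-1 <= poweR (C * b `^ (- t))%:E t^-1)%E.
  apply: gt0_ler_poweR => //; first by rewrite invr_ge0 ltW.
    by rewrite in_itv /= kt_sum_ge0 leey.
  by rewrite in_itv /= leey lee_fin mulr_ge0 ?powR_ge0.
apply: le_trans (lee_wpmul2l _ powC) _; first by rewrite lee_fin ltW.
rewrite poweR_EFin -EFinM lee_fin powRM ?powR_ge0 // -powRrM mulNr.
rewrite mulfV ?gt_eqF // powR_inv1; last exact: ltW.
by rewrite mulrCA mulfV ?mulr1 // gt_eqF.
Qed.

Lemma kt_large_coords_sum_le (d : Lam -> R) (K al L e : R) (s : seq Lam) :
  0 < al -> 0 <= K -> 0 < L -> 0 <= e -> (forall j, 0 < a j) ->
  (kt_norm a r t x <= K%:E)%E -> (wnorm a 2 d <= (L * e)%:E)%E -> uniq s ->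
  \sum_(j <- s | th j * al < `|x j|) r j * `|d j| <=
  L ^+ 2 * (K `^ t * al `^ (1 - t)) + e ^+ 2 / (4 * al).
Proof.
move=> al0 K0 L0 e0 a0 xK dLe us.
pose l := 2 * al * L ^+ 2; have l0 : 0 < l by rewrite !mulr_gt0 ?exprn_gt0.
have wsum : \sum_(j <- s | th j * al < `|x j|) wt j <= (K / al) `^ t.
  rewrite -big_filter; apply: kt_norm_sum_le => //; first exact: filter_uniq.
  by move=> j; rewrite mem_filter => /andP[].
have dsum : \sum_(j <- s | th j * al < `|x j|) (a j * `|d j|) ^+ 2 <= (L * e) ^+ 2.
  by apply: sum_sq_le_wnorm2 => // [j|]; rewrite ?mulr_ge0 // ltW.
apply: le_trans (_ : \sum_(j <- s | th j * al < `|x j|)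
    (l / 2 * wt j + (2 * l)^-1 * (a j * `|d j|) ^+ 2) <= _).
  by apply: ler_sum => j _; exact: weighted_amgm.
rewrite big_split /= -!mulr_sumr.
apply: le_trans (lerD (ler_wpM2l _ wsum) (ler_wpM2l _ dsum)) _.
- by rewrite divr_ge0 // ltW.
- by rewrite invr_ge0 mulr_ge0 // ltW.
rewrite -mul_powR_div // le_eqVlt; apply/orP; left; apply/eqP.
by rewrite /l; field; rewrite !gt_eqF.
Qed.

End kt_norm.

Definition dyadic_const {R : realType} (t : R) : R := 2 `^ t / (1 - 2 `^ t / 2).

Lemma dyadic_const_gt0 {R : realType} (t : R) : t < 1 -> 0 < dyadic_const t.
Proof.
move=> t1; rewrite divr_gt0 ?powR_gt0 // subr_gt0.
by rewrite ltr_pdivrMr // mul1r powR2_lt2.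
Qed.

Lemma dyadic_layer_term {R : realType} (K t al : R) k : 0 < al -> 0 <= K ->
  al * (2^-1) ^+ k * (K / (al * (2^-1) ^+ k.+1)) `^ t =
  K `^ t * al `^ (1 - t) * 2 `^ t * (2 `^ t / 2) ^+ k.
Proof.
move=> al0 K0; have h2k : 0 < 2 ^+ k :> R by rewrite exprn_gt0.
rewrite !exprVn invfM invrK powRM //; last by rewrite mulr_ge0 ?invr_ge0 ?ltW.
rewrite powRM ?invr_ge0 ?ltW ?exprn_gt0 // powRV // powR_exprn // exprS.
rewrite powRB; last by rewrite (gt_eqF al0) implybT.
rewrite powRr1 ?ltW // exprMn exprVn.
have : 0 < al `^ t by rewrite powR_gt0.
have : 0 < 2 `^ t :> R by rewrite powR_gt0.
by move=> ? ?; field; rewrite !gt_eqF.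
Qed.

Lemma dyadic_scale_lt {R : realType} (g u : R) N : 0 < u ->
  ((Num.truncn (g / u)).+1 <= N)%N -> g * (2^-1) ^+ N < u.
Proof.
move=> u0 gN; rewrite exprVn mulrC ltr_pdivrMl ?exprn_gt0 // -ltr_pdivrMr //.
apply: lt_le_trans (archimedean.Num.Theory.truncnS_gt _) _.
apply: le_trans (_ : N%:R <= _); first by rewrite ler_nat.
by rewrite -natrX ler_nat ltnW // ltn_expl.
Qed.

Section kt_small_coordinates.
Context {R : realType} {Lam : countType}.
Variables (a r x : Lam -> R) (t : R).
Hypotheses (t01 : 0 < t < 1) (r_ge0 : forall j, 0 <= r j).

Local Notation wt j := ((a j)^-2 * r j ^+ 2).
Local Notation th j := ((a j)^-2 * r j).

Lemma kt_dyadic_layer_le k {K al : R} {s : seq Lam} : 0 < al -> 0 <= K ->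
  (kt_norm a r t x <= K%:E)%E -> uniq s ->
  al * (2^-1) ^+ k *
    \sum_(j <- s | th j * (al * (2^-1) ^+ k.+1) < `|x j|) wt j <=
  K `^ t * al `^ (1 - t) * 2 `^ t * (2 `^ t / 2) ^+ k.
Proof.
move=> al0 K0 xK us; have /andP[t0 _] := t01.
rewrite -dyadic_layer_term //; apply: ler_wpM2l.
  by rewrite mulr_ge0 ?exprn_ge0 // ltW.
rewrite -big_filter; apply: (kt_norm_sum_le a r x).
all: rewrite ?filter_uniq ?mulr_gt0 ?exprn_gt0 //.
by move=> j; rewrite mem_filter => /andP[].
Qed.

Lemma kt_small_coords_sum_le (K al : R) (s : seq Lam) : 0 < al -> 0 <= K ->
  (kt_norm a r t x <= K%:E)%E -> uniq s ->
  \sum_(j <- s | ~~ (th j * al < `|x j|)) r j * `|x j| <=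
  dyadic_const t * K `^ t * al `^ (1 - t).
Proof.
move=> al0 K0 xK us; have /andP[t0 t1] := t01.
(* every nonzero x_j, j in s, exceeds its threshold th_j al 2^-N *)
pose N := \max_(j <- s) (Num.truncn (th j * al / `|x j|)).+1.
pose f j k := if th j * (al * (2^-1) ^+ k.+1) < `|x j|
  then wt j * (al * (2^-1) ^+ k) else 0.
have f0 j k : 0 <= f j k.
  rewrite /f; case: ifP => _ //.
  by rewrite mulr_ge0 ?kt_weight_ge0 // mulr_ge0 ?exprn_ge0 // ltW.
have coord j : j \in s -> ~~ (th j * al < `|x j|) ->
    r j * `|x j| <= \sum_(k < N) f j k.
  rewrite -leNgt => js xth; have [->|xj0] := eqVneq (x j) 0.
    by rewrite normr0 mulr0 sumr_ge0.
  have g0 : 0 <= th j * al by rewrite !mulr_ge0 ?invr_ge0 ?sqr_ge0 // ltW.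
  have := dyadic_layer_le _ _ N g0 xth; rewrite dyadic_scale_lt ?normr_gt0 //; last first.
    exact: (@leq_bigmax_seq _ s xpredT (fun j => (Num.truncn (th j * al / `|x j|)).+1) j).
  move=> /(_ isT)/(ler_wpM2l (r_ge0 j))/le_trans; apply; rewrite mulr_sumr.
  apply: ler_sum => k _; rewrite /f !mulrA; case: ifP => _; last by rewrite mulr0.
  by rewrite le_eqVlt; apply/orP; left; apply/eqP; ring.
pose q := 2 `^ t / 2 : R; pose c := K `^ t * al `^ (1 - t) * 2 `^ t.
have q0 : 0 < q by rewrite divr_gt0 ?powR_gt0.
have q1 : `|q| < 1 by rewrite gtr0_norm // ltr_pdivrMr // mul1r powR2_lt2.
have c0 : 0 <= c by rewrite !mulr_ge0 ?powR_ge0.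
apply: le_trans (_ : \sum_(j <- s | ~~ (th j * al < `|x j|)) \sum_(k < N) f j k <= _).
  by rewrite big_seq_cond [leRHS]big_seq_cond; apply: ler_sum => j /andP[]; exact: coord.
apply: le_trans (_ : \sum_(j <- s) \sum_(k < N) f j k <= _).
  rewrite [leRHS](bigID (fun j => ~~ (th j * al < `|x j|))) lerDl.
  by apply: sumr_ge0 => j _; exact: sumr_ge0.
rewrite exchange_big /=; apply: le_trans (_ : \sum_(k < N) c * q ^+ k <= _).
  apply: ler_sum => k _; apply: le_trans (kt_dyadic_layer_le k al0 K0 xK us).
  rewrite mulr_sumr [leRHS]big_mkcond le_eqVlt; apply/orP; left; apply/eqP.
  by apply: eq_bigr => j _; rewrite /f; case: ifP => // _; exact: mulrC.
have := geometric_le_lim N c0 q0 q1; rewrite /series /= big_mkord => /le_trans; apply.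
by rewrite le_eqVlt; apply/orP; left; apply/eqP; rewrite /dyadic_const /c /q; ring.
Qed.

End kt_small_coordinates.

Section shrink.
Context {R : realType} {Lam : countType}.
Variables (s : seq Lam) (d x : Lam -> R).
Hypothesis d_gt0 : forall j, 0 < d j.
Hypothesis d_lt : forall j, j \in s -> d j < `|x j|.

Definition shrink : Lam -> R :=
  fun j => if j \in s then x j * (1 - d j / `|x j|) else x j.

Lemma shrink_out j : j \notin s -> shrink j = x j.
Proof. by rewrite /shrink => /negbTE ->. Qed.

Lemma shrink_in j : j \in s ->
  `|shrink j| = `|x j| - d j /\ `|x j - shrink j| = d j.
Proof.
move=> js; have dx := d_lt j js; have x0 : 0 < `|x j| := lt_trans (d_gt0 j) dx.
have q0 : 0 < 1 - d j / `|x j| by rewrite subr_gt0 ltr_pdivrMr // mul1r.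
have xd : `|x j| / `|x j| = 1 by rewrite mulfV ?gt_eqF.
rewrite /shrink js; split.
  by rewrite normrM (gtr0_norm q0) mulrBr mulr1 mulrCA xd mulr1.
rewrite mulrBr mulr1 opprB addrCA subrr addr0 normrM.
by rewrite (ger0_norm (divr_ge0 (ltW (d_gt0 j)) (ltW x0))) mulrCA xd mulr1.
Qed.

Lemma shrink_le_abs j : `|shrink j| <= `|x j|.
Proof.
have [js|js] := boolP (j \in s); last by rewrite shrink_out.
by have [-> _] := shrink_in j js; rewrite lerBlDr lerDl ltW.
Qed.

Lemma shrink_wnorm1 (w : Lam -> R) : uniq s -> (forall j, 0 <= w j) ->
  wnorm w 1 x = (wnorm w 1 shrink + (\sum_(j <- s) w j * d j)%:E)%E.
Proof.
move=> us w0; rewrite !wnorm1E // big_seq big_mkcond.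
rewrite -(esum_finite_support _ s us) => [|j|j /negbTE -> //]; last first.
  by case: ifP => // _; rewrite mulr_ge0 // ltW.
rewrite -esumD => [|j _|j _]; rewrite ?lee_fin ?mulr_ge0 //; last first.
  by case: ifP => // _; rewrite mulr_ge0 // ltW.
apply: eq_esum => j _; rewrite -EFinD; congr (_%:E).
have [js|js] := boolP (j \in s); last by rewrite shrink_out // addr0.
by have [-> _] := shrink_in j js; ring.
Qed.

Lemma shrink_wnorm2_le (w : Lam -> R) (b : R) : uniq s ->
  (forall j, 0 <= w j) -> 0 <= b ->
  (wnorm w 2 (x \- shrink)%R <= b%:E)%E =
  (\sum_(j <- s) (w j * d j) ^+ 2 <= b ^+ 2).
Proof.
move=> us w0 b0; rewrite wnorm2_le // (esum_finite_support _ s us); first last.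
- by move=> j /shrink_out /= ->; rewrite subrr normr0 mulr0 expr2 mulr0.
- by move=> j; rewrite sqr_ge0.
rewrite lee_fin; congr (_ <= _); rewrite big_seq [RHS]big_seq.
by apply: eq_bigr => j js /=; have [_ ->] := shrink_in j js.
Qed.

End shrink.

Definition rate_const {R : realType} (L t : R) : R :=
  2 * L ^+ 2 + 2 * dyadic_const t + (8 * L ^+ 2) `^ t^-1.

Lemma rate_const_gt0 {R : realType} (L t : R) : 0 < L -> t < 1 ->
  0 < rate_const L t.
Proof.
move=> L0 t1; rewrite ltr_wpDr ?powR_ge0 // addr_gt0 // mulr_gt0 //.
  exact: exprn_gt0.
exact: dyadic_const_gt0.
Qed.

Section tikhonov_minimizers.
Context {R : realType} {Lam : countType} {Y : completeNormedModType R}.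
Context {a r : Lam -> R} {D : set (Lam -> R)} {F : (Lam -> R) -> Y}.
Context {L : R} {xp : Lam -> R}.
Hypotheses (a_gt0 : forall j, 0 < a j) (r_gt0 : forall j, 0 < r j).
Hypothesis L_gt0 : 0 < L.
Hypothesis F_lower : forall x1 x2, D x1 -> D x2 ->
  ((L^-1)%:E * wnorm a 2 (x1 \- x2)%R <= (`|F x1 - F x2|)%:E)%E.
Hypothesis F_upper : forall x1 x2, D x1 -> D x2 ->
  ((`|F x1 - F x2|)%:E <= L%:E * wnorm a 2 (x1 \- x2)%R)%E.
Hypotheses (D_l2 : D `<=` in_lp a 2) (D_A2 : A2 a D).
Hypotheses (D_xp : D xp) (xp_l1 : in_lp r 1 xp).

Let r_ge0 j : 0 <= r j. Proof. exact: ltW. Qed.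
Let a_ge0 j : 0 <= a j. Proof. exact: ltW. Qed.
Let th_gt0 j : 0 < (a j)^-2 * r j.
Proof. by rewrite mulr_gt0 // invr_gt0 exprn_gt0. Qed.

Lemma argmin_le_source {al x} : 0 < al -> is_argmin r D F xp al x ->
  exists np nx, [/\ 0 <= np, 0 <= nx, wnorm r 1 xp = np%:E,
    wnorm r 1 x = nx%:E & 2^-1 * `|F xp - F x| ^+ 2 + al * nx <= al * np].
Proof.
move=> al0 [Dx xmin]; have [np np0 Enp] := in_lp_fin xp_l1.
have := xmin xp D_xp; rewrite /tikh subrr normr0 expr0n mulr0 add0e Enp.
have := wnorm_ge0 r 1 x; case: (wnorm r 1 x) => [nx| |] //= nx0; last first.
  by rewrite gt0_muley ?lte_fin // addey // leNgt -EFinM ltry.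
by rewrite -!EFinM -EFinD lee_fin => le_np; exists np, nx.
Qed.

Lemma argmin_lower_bound {al x} : is_argmin r D F xp al x ->
  (wnorm a 2 (xp \- x)%R <= (L * `|F xp - F x|)%:E)%E.
Proof.
case=> Dx _; have := F_lower xp x D_xp Dx.
by rewrite lee_pdivrMl ?invr_gt0 // invrK EFinM.
Qed.

Lemma argmin_source_rate {t K al x} : 0 < t < 1 -> 0 < al -> 0 <= K ->
  (kt_norm a r t xp <= K%:E)%E -> is_argmin r D F xp al x ->
  (wnorm r 1 (xp \- x)%R <=
     ((2 * L ^+ 2 + 2 * dyadic_const t) * (K `^ t * al `^ (1 - t)))%:E)%E.
Proof.
move=> t01 al0 K0 xpK xmin; have /andP[t0 _] := t01.
have [np [nx [np0 nx0 Enp Enx le_np]]] := argmin_le_source al0 xmin.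
have dLe := argmin_lower_bound xmin; set e := `|F xp - F x| in le_np dLe.
pose Z := K `^ t * al `^ (1 - t).
have tri := wnorm1_add_sub_le r x xp (fun j => (a j)^-2 * r j * al < `|xp j|) r_ge0.
have gsum : (\esum_(j in [set: Lam]) (2 * (if (a j)^-2 * r j * al < `|xp j|
      then r j * `|xp j - x j| else r j * `|xp j|))%:E <=
    (2 * (L ^+ 2 * Z + e ^+ 2 / (4 * al) + dyadic_const t * Z))%:E)%E.
  apply: esum_le_sums => s us _; rewrite -mulr_sumr ler_wpM2l //.
  rewrite (bigID (fun j => (a j)^-2 * r j * al < `|xp j|)) /= lerD //.
    rewrite (eq_bigr (fun j => r j * `|(xp \- x)%R j|)) => [|j ->//].
    by apply: kt_large_coords_sum_le; rewrite ?normr_ge0.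
  rewrite (eq_bigr (fun j => r j * `|xp j|)) => [|j /negbTE ->//].
  by rewrite mulrA; apply: kt_small_coords_sum_le.
move: tri => /le_trans /(_ (leeD2l _ gsum)); rewrite Enp Enx -EFinD.
have := wnorm_ge0 r 1 (xp \- x)%R; case: (wnorm r 1 _) => [nd| |] //= nd0.
rewrite -EFinD !lee_fin => nd_le.
have e_le : e ^+ 2 / (4 * al) * 2 <= np - nx.
  by rewrite mulrAC ler_pdivrMr ?mulr_gt0 //; lra.
set u := e ^+ 2 / (4 * al) in nd_le e_le; rewrite -/Z; lra.
Qed.

Lemma argmin_shrink_gain {sg tau x} {s : seq Lam} : 0 < sg -> 0 < tau ->
  is_argmin r D F xp tau x -> uniq s ->
  (forall j, j \in s -> sg * ((a j)^-2 * r j * tau) < `|x j|) ->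
  let y := tau * Num.sqrt (\sum_(j <- s) (a j)^-2 * r j ^+ 2) in
  sg * y ^+ 2 <= `|F xp - F x| * L * sg * y + L ^+ 2 * sg ^+ 2 * y ^+ 2 / 2.
Proof.
move=> sg0 tau0 xmin us sx; cbv zeta; set y := tau * _.
have [np [nx [_ _ _ Enx _]]] := argmin_le_source tau0 xmin.
case: xmin => Dx xmin; set e := `|F xp - F x|.
pose dl j := sg * ((a j)^-2 * r j * tau).
have dl0 j : 0 < dl j := mulr_gt0 sg0 (mulr_gt0 (th_gt0 j) tau0).
pose z := shrink s dl x; pose M := \sum_(j <- s) (a j)^-2 * r j ^+ 2.
have zx i : `|z i| <= `|x i| := shrink_le_abs _ _ _ dl0 sx i.
have Dz : D z.
  by apply: (D_A2 x z Dx) => //; exact: (in_lp_le_abs a_ge0 _ zx (D_l2 _ Dx)).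
have M0 : 0 <= M by apply: sumr_ge0 => j _; exact: kt_weight_ge0.
have norm_xz : wnorm r 1 x = (wnorm r 1 z + (sg * tau * M)%:E)%E.
  rewrite (shrink_wnorm1 _ _ _ dl0 sx r us r_ge0) /M mulr_sumr.
  by congr (_ + _%:E)%E; apply: eq_bigr => j _; rewrite /dl; ring.
have [nz _ Enz] : exists2 nz, 0 <= nz & wnorm r 1 z = nz%:E.
  by apply: in_lp_fin (in_lp_le_abs r_ge0 ler01 zx _); rewrite /in_lp Enx ltry.
have Fxz : `|F x - F z| <= L * (sg * tau * Num.sqrt M).
  rewrite -lee_fin EFinM; apply: le_trans (F_upper x z Dx Dz) _.
  apply: lee_wpmul2l; first by rewrite lee_fin ltW.
  rewrite (shrink_wnorm2_le _ _ _ dl0 sx a _ us a_ge0); last first.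
    by rewrite !mulr_ge0 ?sqrtr_ge0 // ltW.
  rewrite [leRHS]exprMn sqr_sqrtr // /M mulr_sumr le_eqVlt; apply/orP; left; apply/eqP.
  by apply: eq_bigr => j _; rewrite /dl; field; rewrite gt_eqF.
have Fxpz : `|F xp - F z| <= e + L * (sg * y).
  rewrite /y [sg * _]mulrA -(subrK (F x) (F xp)) -addrA.
  by apply: le_trans (ler_normD _ _) _; rewrite lerD2l.
have y0 : 0 <= y by rewrite mulr_ge0 ?sqrtr_ge0 // ltW.
have Fxpz2 : `|F xp - F z| ^+ 2 <= (e + L * (sg * y)) ^+ 2.
  rewrite ler_sqr ?nnegrE //.
  exact: addr_ge0 (normr_ge0 _) (mulr_ge0 (ltW L_gt0) (mulr_ge0 (ltW sg0) y0)).
have yM : sg * y ^+ 2 = sg * tau * tau * M.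
  by rewrite /y exprMn sqr_sqrtr // -/M; ring.
have := xmin z Dz; rewrite /tikh norm_xz Enz -EFinD -!EFinM -!EFinD lee_fin -/e.
lra.
Qed.

Lemma argmin_shrink_sum_le {tau x} {s : seq Lam} : 0 < tau ->
  is_argmin r D F xp tau x -> uniq s ->
  (forall j, j \in s -> (a j)^-2 * r j * tau / 2 < `|x j|) ->
  tau ^+ 2 * \sum_(j <- s) (a j)^-2 * r j ^+ 2 <= 4 * (L * `|F xp - F x|) ^+ 2.
Proof.
move=> tau0 xmin us sx.
(* sg <= 1/2 keeps the shrinking amounts below |x_j|, and sg L^2 <= 1 is what
   quadratic_gain_le needs to absorb the quadratic term *)
pose sg := (2 + L ^+ 2)^-1; have sg0 : 0 < sg by rewrite invr_gt0 ltr_wpDr ?sqr_ge0.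
have sgL : sg * L ^+ 2 <= 1.
  by rewrite ler_pdivrMl ?ltr_wpDr ?sqr_ge0 // mulr1 lerDr.
have sgx j : j \in s -> sg * ((a j)^-2 * r j * tau) < `|x j|.
  move=> /sx; apply: le_lt_trans; rewrite [leRHS]mulrC ler_pM2r; last first.
    exact: mulr_gt0 (th_gt0 j) tau0.
  by rewrite lef_pV2 ?posrE ?ltr_wpDr ?sqr_ge0 // lerDl sqr_ge0.
have := argmin_shrink_gain sg0 tau0 xmin us sgx.
set y := tau * _ => /quadratic_gain_le y_le.
have y0 : 0 <= y by rewrite mulr_ge0 ?sqrtr_ge0 // ltW.
have {}y_le : y <= 2 * `|F xp - F x| * L by apply: y_le => //; exact: ltW.
rewrite -[X in _ * X]sqr_sqrtr ?sumr_ge0 // => [|j _]; last exact: kt_weight_ge0.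
rewrite -exprMn -/y (_ : 4 * _ = (2 * `|F xp - F x| * L) ^+ 2); last by ring.
by rewrite ler_sqr ?nnegrE // ?mulr_ge0 ?sqrtr_ge0 // ltW.
Qed.

Lemma argmin_kt_sum_le {tau x} {s : seq Lam} : 0 < tau ->
  is_argmin r D F xp tau x -> uniq s ->
  (forall j, j \in s -> (a j)^-2 * r j * tau < `|xp j|) ->
  tau ^+ 2 * \sum_(j <- s) (a j)^-2 * r j ^+ 2 <= 8 * (L * `|F xp - F x|) ^+ 2.
Proof.
move=> tau0 xmin us sxp; have dLe := argmin_lower_bound xmin.
set e := `|F xp - F x| in dLe *; have e0 : 0 <= e := normr_ge0 _.
rewrite (bigID (fun j => `|x j| <= `|xp j| / 2)) /= mulrDr.
have large : tau ^+ 2 * \sum_(j <- s | ~~ (`|x j| <= `|xp j| / 2))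
    (a j)^-2 * r j ^+ 2 <= 4 * (L * e) ^+ 2.
  rewrite -big_filter; apply: argmin_shrink_sum_le; rewrite ?filter_uniq //.
  move=> j; rewrite mem_filter -ltNge => /andP[xpx /sxp]; lra.
suff : tau ^+ 2 * \sum_(j <- s | `|x j| <= `|xp j| / 2) (a j)^-2 * r j ^+ 2 <=
  4 * (L * e) ^+ 2 by lra.
apply: le_trans (_ : 4 * \sum_(j <- s | `|x j| <= `|xp j| / 2)
    (a j * `|(xp \- x)%R j|) ^+ 2 <= _); last first.
  by apply: ler_wpM2l => //; apply: sum_sq_le_wnorm2; rewrite // mulr_ge0 // ltW.
rewrite !mulr_sumr big_seq_cond [leRHS]big_seq_cond.
apply: ler_sum => j /andP[js xpx].
have th_d : (a j)^-2 * r j * tau / 2 <= `|xp j - x j|.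
  by have := lerB_dist (xp j) (x j); have := sxp j js; lra.
have th_ge0 : 0 <= (a j)^-2 * r j * tau / 2.
  by apply: divr_ge0 => //; exact: ltW (mulr_gt0 (th_gt0 j) tau0).
have -> : tau ^+ 2 * ((a j)^-2 * r j ^+ 2) =
    4 * (a j * ((a j)^-2 * r j * tau / 2)) ^+ 2 by field; rewrite gt_eqF.
apply: ler_wpM2l => //; rewrite ler_sqr ?nnegrE ?(mulr_ge0 (a_ge0 j)) //.
exact: ler_wpM2l.
Qed.

Context {t : R} {xa : R -> Lam -> R}.
Hypothesis t01 : 0 < t < 1.
Hypothesis xa_min : forall al, 0 < al -> is_argmin r D F xp al (xa al).

Definition source_rate (C : R) := forall al, 0 < al ->
  (wnorm r 1 (xp \- xa al)%R <= (C * al `^ (1 - t))%:E)%E.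

Definition residual_rate (C : R) := forall al, 0 < al ->
  `|F xp - F (xa al)| <= C * al `^ ((2 - t) / 2).

Lemma source_rate_mono C C' : C <= C' -> source_rate C -> source_rate C'.
Proof.
move=> CC' rateC al al0; apply: le_trans (rateC al al0) _.
by rewrite lee_fin ler_wpM2r ?powR_ge0.
Qed.

Lemma source_rate_of_kt_norm K : 0 <= K -> (kt_norm a r t xp <= K%:E)%E ->
  source_rate ((2 * L ^+ 2 + 2 * dyadic_const t) * K `^ t).
Proof.
move=> K0 xpK al al0; rewrite -mulrA.
by apply: argmin_source_rate => //; exact: xa_min.
Qed.

Lemma residual_rate_of_source_rate C : 0 < C -> source_rate C ->
  residual_rate (Num.sqrt (2 * C)).
Proof.
move=> C0 rateC al al0.
have [np [nx [_ _ Enp Enx le_np]]] := argmin_le_source al0 (xa_min _ al0).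
have := wnorm1_le_add_sub r (xa al) xp r_ge0; rewrite Enp Enx => /le_trans.
move=> /(_ _ (leeD2l _ (rateC al al0))); rewrite -EFinD lee_fin => np_le.
have e_le : `|F xp - F (xa al)| ^+ 2 <= 2 * C * (al * al `^ (1 - t)).
  have : al * (np - nx) <= al * (C * al `^ (1 - t)).
    by apply: ler_wpM2l; [exact: ltW | lra].
  lra.
rewrite -ler_sqr ?nnegrE ?mulr_ge0 ?sqrtr_ge0 ?powR_ge0 // exprMn sqr_sqrtr.
  rewrite powR_half_sqr; last exact: ltW.
  by rewrite (_ : 2 - t = 1%:R + (1 - t)) ?powR_addn ?expr1 //; ring.
by rewrite mulr_ge0 // ltW.
Qed.

Lemma kt_norm_le_of_residual_rate C : 0 < C -> residual_rate C ->
  (kt_norm a r t xp <= ((8 * L ^+ 2) `^ t^-1 * C `^ (2 / t))%:E)%E.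
Proof.
move=> C0 rateC; have /andP[t0 _] := t01.
have L8 : 0 <= 8 * L ^+ 2 by rewrite mulr_ge0 ?sqr_ge0.
have C8 : 0 <= 8 * L ^+ 2 * C ^+ 2 by rewrite mulr_ge0 ?sqr_ge0.
apply: le_trans (kt_norm_le_of_sums a r xp t t0 _ C8 _) _; last first.
  by rewrite lee_fin powRM ?sqr_ge0 // -[C ^+ 2](powR_mulrn _ (ltW C0)) -powRrM.
move=> b b0 s us sb.
have e_le : `|F xp - F (xa b)| ^+ 2 <= C ^+ 2 * (b ^+ 2 * b `^ (- t)).
  rewrite -powR_addn // -powR_half_sqr; last exact: ltW.
  rewrite -exprMn ler_sqr ?nnegrE ?normr_ge0 ?rateC //.
  by rewrite mulr_ge0 ?powR_ge0 // ltW.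
rewrite -(ler_pM2l (exprn_gt0 2 b0)).
apply: le_trans (argmin_kt_sum_le b0 (xa_min _ b0) us sb) _.
have -> : b ^+ 2 * (8 * L ^+ 2 * C ^+ 2 * b `^ (- t)) =
  8 * L ^+ 2 * (C ^+ 2 * (b ^+ 2 * b `^ (- t))) by ring.
by rewrite exprMn -mulrA; apply: ler_wpM2l => //; apply: ler_wpM2l; rewrite ?sqr_ge0.
Qed.

Lemma source_rate_of_in_kt : in_kt a r t xp ->
  source_rate (rate_const L t * fine (kt_norm a r t xp) `^ t).
Proof.
rewrite /in_kt; have := kt_norm_ge0 a r xp t.
case E : (kt_norm a r t xp) => [K| |] //= K0 _; rewrite lee_fin in K0.
have xpK : (kt_norm a r t xp <= K%:E)%E by rewrite E.
apply: source_rate_mono (source_rate_of_kt_norm _ K0 xpK).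
by rewrite ler_wpM2r ?powR_ge0 // lerDl powR_ge0.
Qed.

Lemma kt_norm_le_rate_of_residual_rate C : 0 < C -> residual_rate C ->
  (kt_norm a r t xp <= (rate_const L t * C `^ (2 / t))%:E)%E.
Proof.
have /andP[_ /dyadic_const_gt0/ltW Cl0] := t01.
move=> C0 /(kt_norm_le_of_residual_rate _ C0) /le_trans; apply.
rewrite lee_fin ler_wpM2r ?powR_ge0 // lerDr.
by apply: addr_ge0; apply: mulr_ge0; rewrite ?sqr_ge0.
Qed.

End tikhonov_minimizers.

Theorem theorem4p10 (R : realType) (L t : R) :
  0 < L -> 0 < t < 1 ->
  exists c : R, 0 < c /\
  forall (Lam : countType) (a r : Lam -> R) (Y : completeNormedModType R)
         (D : set (Lam -> R)) (F : (Lam -> R) -> Y)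
         (xp : Lam -> R) (xa : R -> Lam -> R),
    A1 a r D F L -> A2 a D ->
    D xp -> in_lp r 1 xp ->
    (forall alpha, 0 < alpha -> is_argmin r D F xp alpha (xa alpha)) ->
    let ii C2 := forall alpha, 0 < alpha ->
          (wnorm r 1 (xp \- xa alpha)%R <= (C2 * alpha `^ (1 - t))%:E)%E in
    let iii C3 := forall alpha, 0 < alpha ->
          `|F xp - F (xa alpha)| <= C3 * alpha `^ ((2 - t) / 2) in
    (* equivalences *)
    (in_kt a r t xp <-> exists C2, 0 < C2 /\ ii C2) /\
    ((exists C2, 0 < C2 /\ ii C2) <-> exists C3, 0 < C3 /\ iii C3) /\
    (* quantitative statements *)
    (in_kt a r t xp -> ii (c * fine (kt_norm a r t xp) `^ t)) /\
    (forall C2, 0 < C2 -> ii C2 -> iii (Num.sqrt (2 * C2))) /\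
    (forall C3, 0 < C3 -> iii C3 ->
       (kt_norm a r t xp <= (c * C3 `^ (2 / t))%:E)%E).
Proof.
move=> L0 t01; have /andP[_ t1] := t01.
exists (rate_const L t); split; first exact: rate_const_gt0.
move=> Lam a r Y D F xp xa [[a0 r0] _ [Dl2 _] _ Flip] A2D Dxp xp_l1 xa_min ii iii.
have F_lower x1 x2 D1 D2 := proj1 (Flip x1 x2 D1 D2).
have F_upper x1 x2 D1 D2 := proj2 (Flip x1 x2 D1 D2).
have i_ii := source_rate_of_in_kt a0 r0 L0 F_lower Dxp xp_l1 t01 xa_min.
have ii_iii := residual_rate_of_source_rate (t := t) r0 Dxp xp_l1 xa_min.
have iii_i := kt_norm_le_rate_of_residual_rate a0 r0 L0 F_lower F_upper Dl2 A2D
  Dxp xp_l1 t01 xa_min.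
have iii_in_kt C3 : 0 < C3 -> iii C3 -> in_kt a r t xp.
  by move=> C0 /(iii_i _ C0) /le_lt_trans; apply; exact: ltry.
have in_kt_ii : in_kt a r t xp -> exists C2, 0 < C2 /\ ii C2.
  move=> xp_kt; exists (rate_const L t * fine (kt_norm a r t xp) `^ t + 1).
  split; last by apply: source_rate_mono (i_ii xp_kt); rewrite lerDl.
  by rewrite ltr_wpDl // mulr_ge0 ?powR_ge0 // ltW // rate_const_gt0.
have ii_iii_ex : (exists C2, 0 < C2 /\ ii C2) -> exists C3, 0 < C3 /\ iii C3.
  case=> C2 [C0 /(ii_iii _ C0) rate3]; exists (Num.sqrt (2 * C2)).
  by rewrite sqrtr_gt0 mulr_gt0.
have iii_ii_ex : (exists C3, 0 < C3 /\ iii C3) -> exists C2, 0 < C2 /\ ii C2.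
  by case=> C3 [C0 /(iii_in_kt _ C0)/in_kt_ii].
split; first by split=> [/in_kt_ii | /ii_iii_ex [C3 [C0 /(iii_in_kt _ C0)]]].
by split; first split.
Qed.
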